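(* Let $n\ge 1$, let $\mathbf{F}=(f_{ij})$ be an $n\times n$ matrix with nonnegative entries ($f_{ij}$ is the flow from node $j$ to node $i$), let $\vec z=(z_1,\dots,z_n)^{\mathrm T}$ be a nonnegative column vector of boundary inputs and $\vec y=(y_1,\dots,y_n)$ a nonnegative row vector of boundary outputs. Define $T^{\mathrm{in}}_i=\sum_{j=1}^n f_{ij}+z_i$ and $T^{\mathrm{out}}_j=\sum_{i=1}^n f_{ij}+y_j$, assume all of these are positive, and assume the system is at steady state, i.e. $T^{\mathrm{in}}_\ell=T^{\mathrm{out}}_\ell$ for every $\ell$. Let $\mathbf{G}'=(g'_{ij})$ with $g'_{ij}=f_{ij}/T^{\mathrm{in}}_i$ and $\mathbf{G}=(g_{ij})$ with $g_{ij}=f_{ij}/T^{\mathrm{out}}_j$, and assume the series $\mathbf{N}'=\sum_{m\ge0}\mathbf{G}'^m=(\mathbf I-\mathbf G')^{-1}$ and $\mathbf{N}=\sum_{m\ge0}\mathbf{G}^m=(\mathbf I-\mathbf G)^{-1}$ converge. Then the realized input ratio $$I/D_{\mathrm{realized,input}}=\frac{\sum_{i=1}^n\bigl(\vec y(\mathbf N'-\mathbf I-\mathbf G')\bigr)_i}{\sum_{i=1}^n(\vec y\mathbf G')_i}$$ and the realized output ratio $$I/D_{\mathrm{realized,output}}=\frac{\sum_{i=1}^n\bigl((\mathbf N-\mathbf I-\mathbf G)\vec z\bigr)_i}{\sum_{i=1}^n(\mathbf G\vec z)_i}$$ are identical.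
   Context: This is the setting of ecological network (throughflow) analysis: nodes are ecosystem compartments, $\mathbf I$ is the $n\times n$ identity matrix. $\mathbf G'$ and $\mathbf G$ are the input- and output-oriented direct flow intensity matrices, and $\mathbf N'$, $\mathbf N$ the corresponding integral flow intensity matrices; in the model setting the paper takes the power series defining them to converge. The ratios compare indirect flow (terms $m\ge2$ of the series) to direct flow (term $m=1$), weighted by the observed boundary vectors. *)

From HB Require Import structures.
From mathcomp Require Import all_boot all_order all_algebra.
From mathcomp Require Import all_classical all_reals all_analysis.
Set Implicit Arguments. Unset Strict Implicit. Unset Printing Implicit Defensive.
Import Order.TTheory GRing.Theory Num.Theory.
Local Open Scope ring_scope.
Local Open Scope classical_set_scope.

(* F i j = flow from node j to node i; z : column vector of boundary inputs;
   y : row vector of boundary outputs. *)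
Definition Tin {R : realType} {n : nat} (F : 'M[R]_n) (z : 'cV[R]_n) (i : 'I_n) : R :=
  \sum_(j < n) F i j + z i 0.
Definition Tout {R : realType} {n : nat} (F : 'M[R]_n) (y : 'rV[R]_n) (j : 'I_n) : R :=
  \sum_(i < n) F i j + y 0 j.

Definition Gin {R : realType} {n : nat} (F : 'M[R]_n) (z : 'cV[R]_n) : 'M[R]_n :=
  \matrix_(i, j) (F i j / Tin F z i).
Definition Gout {R : realType} {n : nat} (F : 'M[R]_n) (y : 'rV[R]_n) : 'M[R]_n :=
  \matrix_(i, j) (F i j / Tout F y j).

Definition mxpsum {R : realType} {n : nat} (A : 'M[R]_n.+1) (k : nat) : 'M[R]_n.+1 :=
  \sum_(m < k) A ^+ m.

Import numFieldNormedType.Exports.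
Definition mxseries_to {R : realType} {n : nat} (A N : 'M[R]_n.+1) : Prop :=
  forall i j : 'I_n.+1, (fun k => mxpsum A k i j) @ \oo --> N i j.

From HB Require Import structures.
From mathcomp Require Import all_boot all_order all_algebra.
From mathcomp Require Import all_classical all_reals all_analysis.
Import Order.TTheory GRing.Theory Num.Theory.
Import numFieldNormedType.Exports.
Set Implicit Arguments. Unset Strict Implicit.
Local Open Scope ring_scope.
Local Open Scope classical_set_scope.

(* With D the diagonal matrix of throughflows, steady state gives
   F = G D = D G', hence D G'^m = G^m D for every m.  The boundary vectors are
   y = 1 (D - F) = 1 (I - G) D and, again by steady state, z = (D - F) 1, so
   y G'^m 1 = 1 (I - G) G^m D 1 = 1 G^m (I - G) D 1 = 1 G^m z.  Summing over m
   and passing to the limit, the numerators and the denominators of the two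
   ratios agree term by term. *)

Lemma sum_row (R : pzSemiRingType) (n : nat) (v : 'rV[R]_n) :
  \sum_(i < n) v 0 i = (v *m (const_mx 1 : 'cV_n)) 0 0.
Proof. by rewrite mxE; apply: eq_bigr => i _; rewrite mxE mulr1. Qed.

Lemma sum_col (R : pzSemiRingType) (n : nat) (v : 'cV[R]_n) :
  \sum_(i < n) v i 0 = ((const_mx 1 : 'rV_n) *m v) 0 0.
Proof. by rewrite mxE; apply: eq_bigr => i _; rewrite mxE mul1r. Qed.

Lemma mulmx_exp_intertwine (R : pzRingType) (n : nat) (A B D : 'M[R]_n) m :
  D *m A = B *m D -> D *m A ^+ m = B ^+ m *m D.
Proof.
move=> DA; elim: m => [|m IHm]; first by rewrite !expr0 mulmx1 mul1mx.
by rewrite !exprS [D *m _]mulmxA DA -mulmxA IHm mulmxA.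
Qed.

Lemma mulmx_exp_transfer (R : pzRingType) (n p q : nat) (A B D : 'M[R]_n)
    (r : 'M[R]_(p, n)) (c : 'M[R]_(n, q)) m :
  D *m A = B *m D ->
  r *m (D - B *m D) *m A ^+ m *m c = r *m B ^+ m *m (D - D *m A) *m c.
Proof.
move=> DA; have commB : (1 - B) *m B ^+ m = B ^+ m *m (1 - B).
  rewrite mulmxBl mulmxBr mul1mx mulmx1; congr (_ - _); exact: commrX.
rewrite DA; have -> : D - B *m D = (1 - B) *m D by rewrite mulmxBl mul1mx.
rewrite -!mulmxA (mulmxA D) (mulmx_exp_intertwine m DA) -!mulmxA.
by rewrite (mulmxA (1 - B)) commB !mulmxA.
Qed.

Lemma mxseries_bilinear_cvg (R : realType) (n p q : nat) (A N : 'M[R]_n.+1)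
    (u : 'M[R]_(p, n.+1)) (v : 'M[R]_(n.+1, q)) i j :
  mxseries_to A N ->
  (fun k => (u *m mxpsum A k *m v) i j) @ \oo --> (u *m N *m v) i j.
Proof.
move=> AN; under eq_fun do rewrite mxE.
rewrite mxE; apply: (cvg_big (P := xpredT) add_continuous) => // l _.
apply: cvgMr_tmp; under eq_fun do rewrite mxE.
rewrite mxE; apply: (cvg_big (P := xpredT) add_continuous) => // h _.
by apply: cvgMl_tmp; apply: AN.
Qed.

Lemma mxseries_bilinear_eq (R : realType) (n p q : nat) (A B N M : 'M[R]_n.+1)
    (u u' : 'M[R]_(p, n.+1)) (v v' : 'M[R]_(n.+1, q)) :
  mxseries_to A N -> mxseries_to B M ->
  (forall m, u *m A ^+ m *m v = u' *m B ^+ m *m v') ->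
  u *m N *m v = u' *m M *m v'.
Proof.
move=> AN BM termE; apply/matrixP => i j.
have psumE k : u *m mxpsum A k *m v = u' *m mxpsum B k *m v'.
  by rewrite /mxpsum !(mulmx_sumr, mulmx_suml); apply: eq_bigr => m _.
have := mxseries_bilinear_cvg (u := u) (v := v) (i := i) (j := j) AN.
under eq_fun do rewrite psumE.
by move=> cvgN; apply: cvg_unique _ cvgN (mxseries_bilinear_cvg BM).
Qed.

Section SteadyState.
Variables (R : realType) (n : nat).
Variables (F : 'M[R]_n) (z : 'cV[R]_n) (y : 'rV[R]_n).

Definition throughflow_mx : 'M[R]_n := diag_mx (\row_j Tout F y j).

Lemma boundary_output : y = const_mx 1 *m (throughflow_mx - F).
Proof.
apply/rowP => j; rewrite mulmxBr mul_mx_diag !mxE mul1r /Tout.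
under [X in _ = _ - X]eq_bigr do rewrite mxE mul1r.
by rewrite addrC addKr.
Qed.

Hypothesis steady_state : forall l, Tin F z l = Tout F y l.

Lemma boundary_input : z = (throughflow_mx - F) *m const_mx 1.
Proof.
apply/colP => i; rewrite mulmxBl mul_diag_mx !mxE mulr1 -steady_state /Tin.
under [X in _ = _ - X]eq_bigr do rewrite mxE mulr1.
by rewrite addrC addKr.
Qed.

Hypothesis Tout_neq0 : forall j, Tout F y j != 0.

Lemma Gout_mul_throughflow : Gout F y *m throughflow_mx = F.
Proof. by apply/matrixP => i j; rewrite mul_mx_diag !mxE divfK. Qed.

Lemma throughflow_mul_Gin : throughflow_mx *m Gin F z = F.
Proof.
by apply/matrixP => i j; rewrite mul_diag_mx !mxE -steady_state mulrC divfK
  ?steady_state.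
Qed.

Lemma boundary_transfer m :
  y *m Gin F z ^+ m *m const_mx 1 = const_mx 1 *m Gout F y ^+ m *m z.
Proof.
have DG : throughflow_mx *m Gin F z = Gout F y *m throughflow_mx.
  by rewrite throughflow_mul_Gin Gout_mul_throughflow.
have := mulmx_exp_transfer (const_mx 1 : 'rV_n) (const_mx 1 : 'cV_n) m DG.
rewrite throughflow_mul_Gin Gout_mul_throughflow -boundary_output.
by rewrite -[RHS]mulmxA -boundary_input.
Qed.

End SteadyState.

Theorem theorem1 (R : realType) (n : nat)
  (F : 'M[R]_n.+1) (z : 'cV[R]_n.+1) (y : 'rV[R]_n.+1)
  (N' N : 'M[R]_n.+1) :
  (forall i j, 0 <= F i j) ->
  (forall i, 0 <= z i 0) ->
  (forall j, 0 <= y 0 j) ->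
  (forall i, 0 < Tin F z i) ->
  (forall j, 0 < Tout F y j) ->
  (forall l, Tin F z l = Tout F y l) ->
  mxseries_to (Gin F z) N' ->
  mxseries_to (Gout F y) N ->
  (\sum_(i < n.+1) (y *m (N' - 1%:M - Gin F z)) 0 i)
    / (\sum_(i < n.+1) (y *m Gin F z) 0 i)
  = (\sum_(i < n.+1) ((N - 1%:M - Gout F y) *m z) i 0)
    / (\sum_(i < n.+1) (Gout F y *m z) i 0).
Proof.
move=> _ _ _ _ Tout_gt0 steady GinN' GoutN.
have Tout_neq0 j : Tout F y j != 0 by rewrite gt_eqF.
have transfer := boundary_transfer steady Tout_neq0.
have limitE := mxseries_bilinear_eq GinN' GoutN transfer.
have directE := transfer 1%N; rewrite expr1 in directE.
have identityE := transfer 0%N; rewrite expr0 in identityE.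
rewrite !sum_row !sum_col !mulmxA !(mulmxBr, mulmxBl).
by rewrite limitE directE identityE.
Qed.
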